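(* Let $\mathfrak v_8$ be a $C(8)$-module and $\mathfrak v_r$ a $C(r)$-module, and let $\mathfrak v_8\otimes\mathfrak v_r$ carry the $C(8+r)$-module structure $J_{(z,w)}=J_z\otimes\mathrm{Id}+K_8\otimes J_w$. If $\mathcal L_r\in{\rm Lag}(\mathfrak v_r)$ and $\mathcal L_8\in{\rm Lag}(\mathfrak v_8)$, then $$\mathcal L_8\otimes\mathcal L_r+\mathcal L_8^\perp\otimes\mathcal L_r^\perp\ \in\ {\rm Lag}(\mathfrak v_8\otimes\mathfrak v_r).$$
   Context: $C(k)$ is the real Clifford algebra of $\mathbb R^k$ with relations $z^2=-\langle z,z\rangle 1$; a $C(k)$-module $\mathfrak w$ has an inner product making each $J_z$ skew-symmetric, and defines the Lie algebra of Heisenberg type $\mathfrak w\oplus\mathbb R^k$ with $\mathbb R^k$ central and $\langle z,[u,v]\rangle=\langle J_zu,v\rangle$. $K_8=J_{z_1}\cdots J_{z_8}$ for an orthonormal basis of $\mathbb R^8$. ${\rm Lag}(\mathfrak w)$ is the set of subspaces $\mathcal L\subset\mathfrak w$ with $[\mathcal L,\mathcal L]=0$ and $\dim\mathcal L=\frac12\dim\mathfrak w$; $\perp$ denotes orthogonal complement; $\mathfrak v_8\otimes\mathfrak v_r$ has the tensor product inner product. *)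

From HB Require Import structures.
From mathcomp Require Import all_boot all_order all_algebra.
From mathcomp Require Import all_reals.
From mathcomp.real_closed Require Export mxtens.
Set Implicit Arguments. Unset Strict Implicit. Unset Printing Implicit Defensive.
Import Order.TTheory GRing.Theory Num.Theory.
Local Open Scope ring_scope.

(* Vectors of a module w of dimension n are row vectors 'rV[R]_n, with the
   standard inner product <u,v> = u v^T; an endomorphism M acts by u |-> u *m M.
   Subspaces are represented by (the row spaces of) square matrices. *)

Definition ip (R : realType) n (u v : 'rV[R]_n) : R := (u *m v^T) 0 0.

Definition Jz (R : realType) k n (J : 'I_k -> 'M[R]_n) (z : 'rV[R]_k) : 'M[R]_n :=
  \sum_(i < k) z 0 i *: J i.

Definition clifford_module (R : realType) k n (J : 'I_k -> 'M[R]_n) : Prop :=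
  (forall z : 'rV[R]_k, Jz J z *m Jz J z = - (ip z z) *: 1%:M) /\
  (forall z : 'rV[R]_k, (Jz J z)^T = - Jz J z).

(* Lie bracket of the H-type algebra w + R^k: <z,[u,v]> = <J_z u, v>,
   so [u,v]_i = <J_{e_i} u, v>. *)
Definition hbracket (R : realType) k n (J : 'I_k -> 'M[R]_n) (u v : 'rV[R]_n)
  : 'rV[R]_k := \row_i ip (u *m J i) v.

Definition Lag (R : realType) k n (J : 'I_k -> 'M[R]_n) (L : 'M[R]_n) : Prop :=
  (forall u v : 'rV[R]_n, (u <= L)%MS -> (v <= L)%MS -> hbracket J u v = 0) /\
  (\rank L).*2 = n.

Definition perp (R : realType) n (L : 'M[R]_n) : 'M[R]_n := kermx L^T.

(* K_8 = J_{o_1} ... J_{o_8} for the orthonormal basis given by the rows of O *)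
Definition K8 (R : realType) n (J : 'I_8 -> 'M[R]_n) (O : 'M[R]_8) : 'M[R]_n :=
  \big[mulmx/1%:M]_(i < 8) Jz J (row i O).

(* C(8+r)-structure on v8 (x) vr: J_{(z,w)} = J_z (x) Id + K8 (x) J_w,
   given on the standard basis of R^(8+r) = R^8 + R^r. *)
Definition Jtens (R : realType) r n8 nr (J8 : 'I_8 -> 'M[R]_n8)
  (O : 'M[R]_8) (Jr : 'I_r -> 'M[R]_nr) (i : 'I_(8 + r)) : 'M[R]_(n8 * nr) :=
  match split i with
  | inl a => J8 a *t (1%:M : 'M[R]_nr)
  | inr b => K8 J8 O *t Jr b
  end.

From HB Require Import structures.
From mathcomp Require Import all_boot all_order all_algebra.
From mathcomp Require Import all_reals.
From mathcomp.real_closed Require Import mxtens.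
From mathcomp Require Import zify.
Set Implicit Arguments. Unset Strict Implicit. Unset Printing Implicit Defensive.
Import GRing.Theory Num.Theory.
Local Open Scope ring_scope.

(* A subspace L is isotropic for the bracket iff L J_i L^T = 0 for every
   generator. If L is Lagrangian and <z,z> = 1, isotropy says that J_z maps L
   into L^perp, hence onto it since both have dimension n/2, and then
   J_z^2 = -1 sends L^perp back onto L. So every such J_z swaps L and L^perp,
   and K_8, a product of eight of them, preserves both. For each generator
   J_a (x) Id or K_8 (x) J_b of the tensor structure one factor swaps and the
   other preserves, so by (A (x) B)(X (x) Y)(C (x) D)^T = AXC^T (x) BYD^T each
   of the four blocks of the form on L_8 (x) L_r + L_8^perp (x) L_r^perp has a
   vanishing factor. The two summands are orthogonal, so their dimensions add
   up to 2 (n_8/2)(n_r/2). *)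

Lemma mulmx_row_col (F : pzRingType) m k n (A : 'M[F]_(m, k)) (B : 'M[F]_(k, n)) p q :
  (row p A *m col q B) 0 0 = (A *m B) p q.
Proof. by rewrite !mxE; apply: eq_bigr => j _; rewrite !mxE. Qed.

Section BilinearForms.
Variables (F : fieldType) (n : nat).
Implicit Types M : 'M[F]_n.

Lemma form_eq0_submx m1 m2 m1' m2' (A : 'M_(m1, n)) (B : 'M_(m2, n))
  (A' : 'M_(m1', n)) (B' : 'M_(m2', n)) M :
  (A' <= A)%MS -> (B' <= B)%MS -> A *m M *m B^T = 0 -> A' *m M *m B'^T = 0.
Proof.
move=> /submxP[X ->] /submxP[Y ->] AMB0.
by rewrite trmx_mul !mulmxA -(mulmxA X) -(mulmxA X) AMB0 mulmx0 mul0mx.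
Qed.

Lemma form_eq0_mapsto m1 m2 m3 (A : 'M_(m1, n)) (B : 'M_(m2, n))
  (C : 'M_(m3, n)) M :
  (A *m M <= B)%MS -> B *m C^T = 0 -> A *m M *m C^T = 0.
Proof. by move=> /submxP[X ->] BC0; rewrite -mulmxA BC0 mulmx0. Qed.

Lemma form_adds_eq0 m1 m2 m3 m4 (A1 : 'M_(m1, n)) (A2 : 'M_(m2, n))
  (B1 : 'M_(m3, n)) (B2 : 'M_(m4, n)) M :
  A1 *m M *m B1^T = 0 -> A1 *m M *m B2^T = 0 ->
  A2 *m M *m B1^T = 0 -> A2 *m M *m B2^T = 0 ->
  (A1 + A2)%MS *m M *m (B1 + B2)%MS^T = 0.
Proof.
move=> A1B1 A1B2 A2B1 A2B2.
apply: (@form_eq0_submx _ _ _ _ (col_mx A1 A2) (col_mx B1 B2)); rewrite ?addsmxE //.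
by rewrite tr_col_mx mul_col_mx mul_col_row A1B1 A1B2 A2B1 A2B2 block_mx0.
Qed.

End BilinearForms.

Section MapsPair.
Variables (F : fieldType) (p n : nat).

Definition maps_pair (A B A' B' : 'M[F]_(p, n)) (M : 'M[F]_n) : Prop :=
  (A *m M <= A')%MS /\ (B *m M <= B')%MS.

Lemma maps_pair_mul A B A' B' A'' B'' M N :
  maps_pair A B A' B' M -> maps_pair A' B' A'' B'' N ->
  maps_pair A B A'' B'' (M *m N).
Proof.
by case=> AM BM [A'N B'N]; split; rewrite mulmxA;
  [apply: submx_trans A'N | apply: submx_trans B'N]; rewrite submxMr.
Qed.

Lemma maps_pair_prod_swaps m (Ms : 'I_m -> 'M[F]_n) A B :
  (forall i, maps_pair A B B A (Ms i)) ->
  maps_pair A B (if odd m then B else A) (if odd m then A else B)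
    (\big[mulmx/1%:M]_(i < m) Ms i).
Proof.
elim: m Ms A B => [|m IHm] Ms A B swapsMs.
  by rewrite big_ord0; split; rewrite mulmx1.
rewrite big_ord_recl /=; apply: maps_pair_mul (swapsMs ord0) _.
have swapsMs' i : maps_pair B A A B (Ms (lift ord0 i)).
  by case: (swapsMs (lift ord0 i)).
by case: (odd m) (IHm _ B A swapsMs').
Qed.

End MapsPair.

Section Tensor.
Variable F : fieldType.

Lemma tens1mx1 m n : (1%:M : 'M[F]_m) *t (1%:M : 'M[F]_n) = 1%:M.
Proof.
apply/matrixP => i j; case: (mxtens_indexP i) => i0 i1.
case: (mxtens_indexP j) => j0 j1; rewrite tensmxE !mxE -natrM mulnb.
by rewrite (can_eq (@mxtens_indexK _ _)) xpair_eqE.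
Qed.

Lemma tensmxS m1 m2 m3 m4 n1 n2 (A : 'M[F]_(m1, n1)) (C : 'M[F]_(m2, n1))
  (B : 'M[F]_(m3, n2)) (D : 'M[F]_(m4, n2)) :
  (A <= C)%MS -> (B <= D)%MS -> (A *t B <= C *t D)%MS.
Proof. by move=> /submxP[X ->] /submxP[Y ->]; rewrite -tensmx_mul submxMl. Qed.

Lemma mxrank_tens m1 n1 m2 n2 (A : 'M[F]_(m1, n1)) (B : 'M[F]_(m2, n2)) :
  \rank (A *t B) = (\rank A * \rank B)%N.
Proof.
have eq_base : (A *t B == row_base A *t row_base B)%MS.
  by apply/andP; split; apply: tensmxS; rewrite ?eq_row_base.
have /row_freeP[X XA] := row_base_free A.
have /row_freeP[Y YB] := row_base_free B.
have : row_free (row_base A *t row_base B).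
  by apply/row_freeP; exists (X *t Y); rewrite tensmx_mul XA YB tens1mx1.
by rewrite (eqmx_rank eq_base) => /eqnP.
Qed.

Lemma tensmx_form m1 m2 m3 m4 n1 n2 (A : 'M[F]_(m1, n1)) (B : 'M[F]_(m2, n2))
  (M : 'M[F]_n1) (N : 'M[F]_n2) (C : 'M[F]_(m3, n1)) (D : 'M[F]_(m4, n2)) :
  (A *t B) *m (M *t N) *m (C *t D)^T = (A *m M *m C^T) *t (B *m N *m D^T).
Proof. by rewrite trmx_tens !tensmx_mul. Qed.

End Tensor.

Section RealOrthogonality.
Variable R : realFieldType.

Lemma mulmx_trmx_eq0 m n (A : 'M[R]_(m, n)) : A *m A^T = 0 -> A = 0.
Proof.
move=> /matrixP AAt0; apply/matrixP => i j; rewrite mxE.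
have /eqP := AAt0 i i; rewrite !mxE psumr_eq0 => [/allP/(_ j)|k _].
  by rewrite mem_index_enum !mxE mulf_eq0 orbb => /(_ isT)/eqP.
by rewrite !mxE -expr2 sqr_ge0.
Qed.

Lemma mxrank_adds_orth m1 m2 n (A : 'M[R]_(m1, n)) (B : 'M[R]_(m2, n)) :
  A *m B^T = 0 -> \rank (A + B)%MS = (\rank A + \rank B)%N.
Proof.
move=> AB0; apply: mxrank_disjoint_sum; apply/eqP/rowV0P => v.
rewrite sub_capmx => /andP[vA vB]; apply: mulmx_trmx_eq0.
by have := form_eq0_submx vA vB (M := 1%:M); rewrite !mulmx1; apply.
Qed.

End RealOrthogonality.

Section Lagrangian.
Variable R : realType.

Definition mx_isotropic k m n (J : 'I_k -> 'M[R]_n) (L : 'M[R]_(m, n)) : Prop :=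
  forall i, L *m J i *m L^T = 0.

Lemma hbracket_eq0P k m n (J : 'I_k -> 'M[R]_n) (L : 'M[R]_(m, n)) :
  (forall u v : 'rV_n, (u <= L)%MS -> (v <= L)%MS -> hbracket J u v = 0) <->
  mx_isotropic J L.
Proof.
split=> [bracket0 i | isoL u v uL vL]; last first.
  by apply/rowP => i; rewrite !mxE /ip (form_eq0_submx uL vL (isoL i)) mxE.
apply/matrixP => p q; rewrite [RHS]mxE -mulmx_row_col row_mul -tr_row.
have /rowP/(_ i) := bracket0 _ _ (row_sub p L) (row_sub q L).
by rewrite /hbracket [X in X = _ -> _]mxE [X in _ = X -> _]mxE.
Qed.

Lemma LagP k n (J : 'I_k -> 'M[R]_n) (L : 'M[R]_n) :
  Lag J L <-> mx_isotropic J L /\ (\rank L).*2 = n.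
Proof. by rewrite /Lag hbracket_eq0P. Qed.

Lemma mx_isotropic_Jz k m n (J : 'I_k -> 'M[R]_n) (L : 'M[R]_(m, n)) z :
  mx_isotropic J L -> L *m Jz J z *m L^T = 0.
Proof.
move=> isoL; rewrite /Jz mulmx_sumr mulmx_suml big1 // => i _.
by rewrite -scalemxAr -scalemxAl isoL scaler0.
Qed.

Lemma perp_orthl n (L : 'M[R]_n) : perp L *m L^T = 0.
Proof. exact: mulmx_ker. Qed.

Lemma perp_orthr n (L : 'M[R]_n) : L *m (perp L)^T = 0.
Proof. by rewrite -[L]trmxK -trmx_mul trmxK perp_orthl trmx0. Qed.

Lemma mxrank_perp n (L : 'M[R]_n) : \rank (perp L) = (n - \rank L)%N.
Proof. by rewrite /perp mxrank_ker mxrank_tr. Qed.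

Lemma swap_perp_form_eq0 n (L M : 'M[R]_n) :
  maps_pair L (perp L) (perp L) L M ->
  L *m M *m L^T = 0 /\ perp L *m M *m (perp L)^T = 0.
Proof.
by case=> LM PM; split; [apply: form_eq0_mapsto LM _ | apply: form_eq0_mapsto PM _];
  rewrite ?perp_orthl ?perp_orthr.
Qed.

Lemma preserve_perp_form_eq0 n (L M : 'M[R]_n) :
  maps_pair L (perp L) L (perp L) M ->
  L *m M *m (perp L)^T = 0 /\ perp L *m M *m L^T = 0.
Proof.
by case=> LM PM; split; [apply: form_eq0_mapsto LM _ | apply: form_eq0_mapsto PM _];
  rewrite ?perp_orthl ?perp_orthr.
Qed.

Lemma lagrangian_swap n (L M : 'M[R]_n) :
  M *m M = - 1%:M -> L *m M *m L^T = 0 -> (\rank L).*2 = n ->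
  maps_pair L (perp L) (perp L) L M.
Proof.
move=> M2 LML0 rankL.
have LM_perp : (L *m M <= perp L)%MS by apply/sub_kermxP.
have [M_unit _] : M \in unitmx /\ - M \in unitmx.
  by apply: mulmx1_unit; rewrite mulmxN M2 opprK.
have /andP[_ perp_LM] : (L *m M == perp L)%MS.
  have [_ <-] := mxrank_leqif_eq LM_perp.
  by rewrite mxrankMfree ?row_free_unit // mxrank_perp; apply/eqP; lia.
split=> //; apply: submx_trans (submxMr M perp_LM) _.
by rewrite -mulmxA M2 mulmxN mulmx1 eqmx_opp.
Qed.

Lemma Jz_lagrangian_swap k n (J : 'I_k -> 'M[R]_n) (L : 'M[R]_n) z :
  clifford_module J -> Lag J L -> ip z z = 1 ->
  maps_pair L (perp L) (perp L) L (Jz J z).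
Proof.
move=> [Jz2 _] /LagP[isoL rankL] z1; apply: lagrangian_swap rankL.
  by rewrite Jz2 z1 scaleN1r.
exact: mx_isotropic_Jz.
Qed.

Lemma Jz_delta k n (J : 'I_k -> 'M[R]_n) a : Jz J (delta_mx 0 a) = J a.
Proof.
rewrite /Jz (bigD1 a) //= big1 => [|j ja]; first by rewrite !mxE !eqxx scale1r addr0.
by rewrite !mxE (negbTE ja) andbF scale0r.
Qed.

Lemma ip_delta k (a : 'I_k) : ip (delta_mx 0 a : 'rV[R]_k) (delta_mx 0 a) = 1.
Proof. by rewrite /ip trmx_delta mul_delta_mx mxE !eqxx. Qed.

Lemma ip_row_orthonormal m k (O : 'M[R]_(m, k)) i :
  O *m O^T = 1%:M -> ip (row i O) (row i O) = 1.
Proof.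
by rewrite /ip tr_row mulmx_row_col => ->; rewrite mxE eqxx.
Qed.

Lemma generator_lagrangian_swap k n (J : 'I_k -> 'M[R]_n) (L : 'M[R]_n) a :
  clifford_module J -> Lag J L -> maps_pair L (perp L) (perp L) L (J a).
Proof. by move=> CJ LagL; rewrite -Jz_delta; apply: Jz_lagrangian_swap; rewrite ?ip_delta. Qed.

Lemma K8_lagrangian_preserve n (J : 'I_8 -> 'M[R]_n) (O : 'M[R]_8) (L : 'M[R]_n) :
  clifford_module J -> Lag J L -> O *m O^T = 1%:M ->
  maps_pair L (perp L) L (perp L) (K8 J O).
Proof.
move=> CJ LagL O_orth; apply: (maps_pair_prod_swaps (Ms := fun i => Jz J (row i O))).
by move=> i; apply: Jz_lagrangian_swap; rewrite ?ip_row_orthonormal.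
Qed.

Lemma tens_perp_isotropic n1 n2 (L1 X : 'M[R]_n1) (L2 Y : 'M[R]_n2) :
  maps_pair L1 (perp L1) (perp L1) L1 X /\ maps_pair L2 (perp L2) L2 (perp L2) Y \/
  maps_pair L1 (perp L1) L1 (perp L1) X /\ maps_pair L2 (perp L2) (perp L2) L2 Y ->
  (L1 *t L2 + perp L1 *t perp L2)%MS *m (X *t Y) *m
    (L1 *t L2 + perp L1 *t perp L2)%MS^T = 0.
Proof.
case=> [[/swap_perp_form_eq0[X1 X2] /preserve_perp_form_eq0[Y1 Y2]] |
        [/preserve_perp_form_eq0[X1 X2] /swap_perp_form_eq0[Y1 Y2]]];
  apply: form_adds_eq0;
  by rewrite tensmx_form ?X1 ?X2 ?Y1 ?Y2 ?tens0mx ?tensmx0.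
Qed.

End Lagrangian.

Theorem theorem4p5 (R : realType) (r n8 nr : nat)
  (J8 : 'I_8 -> 'M[R]_n8) (Jr : 'I_r -> 'M[R]_nr) (O : 'M[R]_8)
  (L8 : 'M[R]_n8) (Lr : 'M[R]_nr) :
  clifford_module J8 -> clifford_module Jr ->
  O *m O^T = 1%:M ->
  Lag J8 L8 -> Lag Jr Lr ->
  Lag (Jtens J8 O Jr) (L8 *t Lr + perp L8 *t perp Lr)%MS.
Proof.
move=> C8 Cr O_orth Lag8 Lagr; apply/LagP; split.
  move=> i; rewrite /Jtens; case: (split i) => [a|b]; apply: tens_perp_isotropic.
    left; split; first exact: generator_lagrangian_swap.
    by split; rewrite mulmx1.
  by right; split; [apply: K8_lagrangian_preserve | apply: generator_lagrangian_swap].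
have summands_orth : (L8 *t Lr) *m (perp L8 *t perp Lr)^T = 0.
  by rewrite trmx_tens tensmx_mul perp_orthr tens0mx.
rewrite mxrank_adds_orth // !mxrank_tens !mxrank_perp.
have [[_ rank8] [_ rankr]] := (Lag8, Lagr).
move: (\rank L8) (\rank Lr) rank8 rankr => a b <- <-; rewrite -!addnn; nia.
Qed.
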